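(* Let $A$ be a finite nonempty set, $m\in\mathbb N_+$, and let $\rho\subseteq A^m$ be a generalized quasiorder. Then for every $n\in\mathbb N_+$ and every $n$-dimensional $m\times\cdots\times m$-array $(a_{i_1,\dots,i_n})_{i_1,\dots,i_n\in\{1,\dots,m\}}$ of elements of $A$ we have: if $\rho\models(a_{i_1,\dots,i_n})$, then $(a_{1,\dots,1},a_{2,\dots,2},\dots,a_{m,\dots,m})\in\rho$.
   Context: An $m$-ary relation $\rho\subseteq A^m$ is reflexive if $(a,\dots,a)\in\rho$ for all $a\in A$. For an $m\times m$-matrix $(a_{ij})$ over $A$, write $\rho\models(a_{ij})$ if every row and every column of the matrix belongs to $\rho$; $\rho$ is (generalized) transitive if $\rho\models(a_{ij})$ implies $(a_{11},\dots,a_{mm})\in\rho$ for every $m\times m$-matrix $(a_{ij})$. A generalized quasiorder is a reflexive and transitive relation. For an $n$-dimensional array $(a_{i_1,\dots,i_n})$ with indices in $\{1,\dots,m\}$, $\rho\models(a_{i_1,\dots,i_n})$ means: for every $j\in\{1,\dots,n\}$ and every fixed choice of the indices $i_1,\dots,i_{j-1},i_{j+1},\dots,i_n$, the $m$-tuple $(a_{i_1,\dots,i_{j-1},1,i_{j+1},\dots,i_n},\dots,a_{i_1,\dots,i_{j-1},m,i_{j+1},\dots,i_n})$ belongs to $\rho$. *)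

From mathcomp Require Import all_boot.
Set Implicit Arguments. Unset Strict Implicit. Unset Printing Implicit Defensive.

Definition reflexive_rel (A : finType) (m : nat) (rho : {set m.-tuple A}) : Prop :=
  forall a : A, [tuple a | _ < m] \in rho.

Definition models_mx (A : finType) (m : nat) (rho : {set m.-tuple A})
  (M : 'I_m -> 'I_m -> A) : Prop :=
  (forall i : 'I_m, [tuple M i j | j < m] \in rho) /\
  (forall j : 'I_m, [tuple M i j | i < m] \in rho).

Definition transitive_rel (A : finType) (m : nat) (rho : {set m.-tuple A}) : Prop :=
  forall M : 'I_m -> 'I_m -> A, models_mx rho M -> [tuple M i i | i < m] \in rho.

Definition gen_quasiorder (A : finType) (m : nat) (rho : {set m.-tuple A}) : Prop :=
  reflexive_rel rho /\ transitive_rel rho.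

Definition upd_idx (n m : nat) (idx : {ffun 'I_n -> 'I_m}) (j : 'I_n) (k : 'I_m)
  : {ffun 'I_n -> 'I_m} := [ffun l => if l == j then k else idx l].

(* The value
   idx j is irrelevant, so idx ranges over all choices of the other indices. *)
Definition models_arr (A : finType) (m n : nat) (rho : {set m.-tuple A})
  (a : {ffun 'I_n -> 'I_m} -> A) : Prop :=
  forall (j : 'I_n) (idx : {ffun 'I_n -> 'I_m}),
    [tuple a (upd_idx idx j k) | k < m] \in rho.

Definition diag_idx (n m : nat) (i : 'I_m) : {ffun 'I_n -> 'I_m} := [ffun _ => i].

(* Call the indices in a set S of coordinates tied together when they all run
   along one common index i while the other coordinates stay fixed.  Lines
   along single coordinates lie in rho by hypothesis.  If lines along disjoint
   sets S and T lie in rho, then, for fixed outer coordinates, the m x m matrix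
   whose (i, k) entry ties S to i and T to k has its rows and columns in rho,
   so by transitivity its diagonal, the line along S :|: T, lies in rho too.
   Adding one coordinate at a time reaches the full diagonal. *)

From mathcomp Require Import all_boot.

Set Implicit Arguments.
Unset Strict Implicit.
Unset Printing Implicit Defensive.

Definition tie_idx (n m : nat) (S : {set 'I_n}) (idx : {ffun 'I_n -> 'I_m})
  (i : 'I_m) : {ffun 'I_n -> 'I_m} := [ffun l => if l \in S then i else idx l].

Lemma tie_idx1 (n m : nat) (j : 'I_n) (idx : {ffun 'I_n -> 'I_m}) (k : 'I_m) :
  tie_idx [set j] idx k = upd_idx idx j k.
Proof. by apply/ffunP => l; rewrite !ffunE inE. Qed.

Lemma tie_idxT (n m : nat) (idx : {ffun 'I_n -> 'I_m}) (i : 'I_m) :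
  tie_idx [set: 'I_n] idx i = diag_idx n i.
Proof. by apply/ffunP => l; rewrite !ffunE inE. Qed.

Lemma tie_idxU (n m : nat) (S T : {set 'I_n}) (idx : {ffun 'I_n -> 'I_m})
  (i : 'I_m) : tie_idx (S :|: T) idx i = tie_idx T (tie_idx S idx i) i.
Proof. by apply/ffunP => l; rewrite !ffunE inE orbC; case: (l \in T). Qed.

Lemma tie_idxC (n m : nat) (S T : {set 'I_n}) (idx : {ffun 'I_n -> 'I_m})
  (i k : 'I_m) :
  [disjoint S & T] ->
  tie_idx T (tie_idx S idx i) k = tie_idx S (tie_idx T idx k) i.
Proof.
move=> dST; apply/ffunP => l; rewrite !ffunE.
by case: ifPn => // lT; rewrite (disjointFl dST lT).
Qed.

Section TiedLines.

Variables (A : finType) (m n : nat) (rho : {set m.-tuple A}).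
Variable a : {ffun 'I_n -> 'I_m} -> A.

Definition lines_in (S : {set 'I_n}) : Prop :=
  forall idx, [tuple a (tie_idx S idx i) | i < m] \in rho.

Lemma lines_in1 (j : 'I_n) : models_arr rho a -> lines_in [set j].
Proof.
move=> rho_a idx; rewrite (eq_mktuple _ (fun i => congr1 a (tie_idx1 j idx i))).
exact: rho_a.
Qed.

Hypothesis rho_trans : transitive_rel rho.

Lemma lines_inU (S T : {set 'I_n}) :
  [disjoint S & T] -> lines_in S -> lines_in T -> lines_in (S :|: T).
Proof.
move=> dST linS linT idx.
pose M (i k : 'I_m) := a (tie_idx T (tie_idx S idx i) k).
have rho_M : models_mx rho M.
  split=> [i | k]; first exact: linT.
  rewrite (eq_mktuple _ (fun i => congr1 a (tie_idxC idx i k dST))).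
  exact: linS.
rewrite (eq_mktuple _ (fun i => congr1 a (tie_idxU S T idx i))).
exact: rho_trans rho_M.
Qed.

Lemma lines_in_neq0 (S : {set 'I_n}) :
  models_arr rho a -> S != set0 -> lines_in S.
Proof.
move=> rho_a; have [k] := ubnP #|S|; elim: k S => // k IH S ltSk.
case/set0Pn=> x Sx; rewrite -(setD1K Sx).
have [-> | /IH linSx] := eqVneq (S :\ x) set0; first by rewrite setU0; apply: lines_in1.
apply: lines_inU; first by rewrite disjoints1 !inE eqxx.
- exact: lines_in1.
- by apply: linSx; rewrite -ltnS (leq_trans _ ltSk) // ltnS (cardsD1 x S) Sx.
Qed.

End TiedLines.

Theorem lemma3p6 (A : finType) (m : nat) (rho : {set m.-tuple A}) :
  0 < #|A| -> 0 < m -> gen_quasiorder rho ->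
  forall (n : nat) (a : {ffun 'I_n -> 'I_m} -> A),
    0 < n -> models_arr rho a ->
    [tuple a (diag_idx n i) | i < m] \in rho.
Proof.
move=> _ m_gt0 [_ rho_trans] n a n_gt0 rho_a.
have setT_neq0 : [set: 'I_n] != set0 by apply/set0Pn; exists (Ordinal n_gt0).
pose idx0 : {ffun 'I_n -> 'I_m} := [ffun=> Ordinal m_gt0].
have := lines_in_neq0 rho_trans rho_a setT_neq0 idx0.
by rewrite (eq_mktuple _ (fun i => congr1 a (tie_idxT idx0 i))).
Qed.
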